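(* Let $q=q(h)$ be a function of $h$ with values in $[0,1]$, and let $\Sigma$ be a random fan chosen with respect to $T(h,1-q)$. Then: (1) If $q\prec 1/h^2$ or $1-q\prec 1/h^2$, then with high probability $X(\Sigma)$ is smooth. (2) If $q\succ 1/h^2$ and $1-q\succ 1/h^2$, then with high probability $X(\Sigma)$ is singular. (3) Moreover, for every integer $k>1$: if $1-q\succ 1/h$ and $q\succ 1/h^2$, then with high probability $X(\Sigma)$ has a singularity of index at least $k$, i.e. $\Sigma$ has a $2$-dimensional cone of singularity index at least $k$.
   Context: A ray is a half-line $\rho=\mathbb{R}_{\ge 0}v\subset\mathbb{R}^2$ with $v\in\mathbb{Z}^2\setminus\{0\}$; $u_\rho$ denotes the primitive lattice generator of $\rho$ (the nonzero lattice point on $\rho$ closest to $0$). On $\mathbb{Z}^2$ use the norm $|(x,y)|=\max\{|x|,|y|\}$, and write $|\rho|=|u_\rho|$. Given a finite set $S$ of rays, its completion is the fan $\Sigma$ with $\Sigma(1)=S$ that is maximal with respect to inclusion among all fans (collections of strongly convex rational polyhedral cones closed under faces and meeting in common faces) with set of rays $S$; concretely its $2$-dimensional cones are the cones spanned by pairs of angularly consecutive rays of $S$ whose angle is less than $\pi$. For $h\ge 1$ and $p\in[0,1]$, the distribution $T(h,p)$ on fans is obtained by including each ray $\rho$ with $|\rho|\le h$ independently with probability $p$ and taking the completion of the chosen set of rays. $X(\Sigma)$ denotes the normal toric surface of the fan $\Sigma$. The singularity index of a $2$-dimensional cone spanned by rays $\rho,\tau$ is $|\det(u_\rho,u_\tau)|$;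 $X(\Sigma)$ is smooth iff every $2$-dimensional cone of $\Sigma$ has index $1$, and ''$X(\Sigma)$ has a singularity of index at least $k$'' means some $2$-dimensional cone has index $\ge k$. For functions $f,g$ of $h$, $f\prec g$ means $\lim_{h\to\infty}f(h)/g(h)=0$, and $f\succ g$ means $g\prec f$. A property holds with high probability if its probability tends to $1$ as $h\to\infty$. *)

From Stdlib Require Import Reals ZArith List Classical ClassicalEpsilon.
Import ListNotations.
Open Scope R_scope.

Definition pt := (Z * Z)%type.

Definition det (u v : pt) : Z := (fst u * snd v - snd u * fst v)%Z.

Definition zrange (h : nat) : list Z :=
  map (fun i => (Z.of_nat i - Z.of_nat h)%Z) (seq 0 (2 * h + 1)).

(* Rays rho with |rho| <= h, represented by their primitive generators u_rho:
   lattice points (x,y) with max(|x|,|y|) <= h and gcd(x,y) = 1. *)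
Definition rays_upto (h : nat) : list pt :=
  filter (fun u : pt => Z.eqb (Z.gcd (fst u) (snd u)) 1)
    (flat_map (fun x => map (fun y => (x, y)) (zrange h)) (zrange h)).

(* All sub-lists (= subsets, since rays_upto has no duplicates) *)
Fixpoint sublists {A : Type} (l : list A) : list (list A) :=
  match l with
  | [] => [[]]
  | x :: l' => map (cons x) (sublists l') ++ sublists l'
  end.

(* 2-dimensional cones of the completion of the set of rays S (given by
   primitive generators): (u,v) spans a 2-dim cone iff v is the angularly
   next ray after u (counterclockwise) and the angle from u to v is < pi,
   i.e. det(u,v) > 0 and no ray of S lies strictly between u and v. *)
Definition cone2 (S : list pt) (u v : pt) : Prop :=
  In u S /\ In v S /\ (det u v > 0)%Z /\
  forall w, In w S -> ~ ((det u w > 0)%Z /\ (det w v > 0)%Z).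

Definition sing_index (u v : pt) : Z := Z.abs (det u v).

Definition smooth (S : list pt) : Prop :=
  forall u v, cone2 S u v -> sing_index u v = 1%Z.

Definition has_sing_ge (k : Z) (S : list pt) : Prop :=
  exists u v, cone2 S u v /\ (sing_index u v >= k)%Z.

Definition indicator (P : Prop) : R :=
  if excluded_middle_informative P then 1 else 0.

(* Probability of event E under T(h,p): each ray with |rho| <= h included
   independently with probability p. *)
Definition probT (h : nat) (p : R) (E : list pt -> Prop) : R :=
  let N := length (rays_upto h) in
  fold_right Rplus 0
    (map (fun S => p ^ length S * (1 - p) ^ (N - length S) * indicator (E S))
         (sublists (rays_upto h))).

(* f < g  (f prec g): lim f(h)/g(h) = 0 (g eventually nonzero so the
   quotient is defined). *)
Definition prec (f g : nat -> R) : Prop :=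
  (exists N, forall n, (n >= N)%nat -> g n <> 0) /\
  Un_cv (fun n => f n / g n) 0.

Definition succ (f g : nat -> R) : Prop := prec g f.

Definition inv_sq (h : nat) : R := 1 / (INR h ^ 2).
Definition inv_lin (h : nat) : R := 1 / INR h.

Definition whp (q : nat -> R) (E : list pt -> Prop) : Prop :=
  Un_cv (fun h => probT h (1 - q h) E) 1.

From Stdlib Require Import Bool Reals ZArith List Lia Lra Classical ClassicalEpsilon.
Import ListNotations.

(* If almost every ray is present the fan is the complete fan of the
   box [|x|, |y| <= h], which is smooth; if almost none is present there is no
   2-dimensional cone.  A union bound over the [O(h^2)] rays gives (1).
   For (2) and (3), a small ray [w = (a, b)], [1 <= b < a <= h / K], has neighbours
   [u], [v] near the boundary of the box with [det u w = det w v = 1].  If [u] and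
   [v] are chosen and [w] is not, the cone spanned by [u] and [v] has index about
   [2 K]; if [u] is chosen, [w] and [w - u] are not, and some ray of the second
   quadrant is chosen, the cone starting at [u] is singular.  These local events
   live on disjoint triples of rays, so by independence the probability that none
   occurs is at most [1 / (1 + #sites * P(site))], and there are [≍ h^2] sites
   because coprime pairs have positive density. *)

Lemma NoDup_map_inj {A B} (f : A -> B) l :
  (forall x y, f x = f y -> x = y) -> NoDup l -> NoDup (map f l).
Proof. intros Hf Hl. apply NoDup_map_NoDup_ForallPairs; auto. intros x y _ _; apply Hf. Qed.

Lemma NoDup_list_prod {A B} (X : list A) (Y : list B) :
  NoDup X -> NoDup Y -> NoDup (list_prod X Y).
Proof.
  induction X as [|x X IH]; simpl; intros HX HY; [constructor|].
  inversion HX as [|? ? Hx HX']; subst. apply NoDup_app.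
  - apply NoDup_map_inj; auto. intros a b E; inversion E; auto.
  - apply IH; auto.
  - intros [a b] Ha Hb. apply in_map_iff in Ha as [y [E _]]. inversion E; subst.
    apply in_prod_iff in Hb as [Hx' _]. auto.
Qed.

Lemma NoDup_app_disj {A} (a b : list A) x : NoDup (a ++ b) -> In x a -> In x b -> False.
Proof.
  induction a as [|y a IH]; simpl; intros Hnd Ha Hb; [destruct Ha|].
  inversion Hnd as [|? ? Hy Hab]; subst. destruct Ha as [<-|Ha].
  - apply Hy, in_or_app; auto.
  - apply IH; auto.
Qed.

Lemma NoDup_flat_map_piece {X Y} (I : list X) (f : X -> list Y) i :
  NoDup (flat_map f I) -> In i I -> NoDup (f i).
Proof.
  induction I as [|j I IH]; simpl; intros Hnd Hi; [destruct Hi|].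
  destruct Hi as [<-|Hi].
  - eapply NoDup_app_remove_r; eauto.
  - apply IH; auto. eapply NoDup_app_remove_l; eauto.
Qed.

Lemma NoDup_flat_map_disj {X Y} (I : list X) (f : X -> list Y) :
  NoDup I -> (forall i, In i I -> NoDup (f i)) ->
  (forall i j y, In i I -> In j I -> i <> j -> In y (f i) -> In y (f j) -> False) ->
  NoDup (flat_map f I).
Proof.
  induction I as [|i I IH]; simpl; intros HI Hf Hdisj; [constructor|].
  inversion HI as [|? ? Hi HI']; subst. apply NoDup_app.
  - apply Hf; auto.
  - apply IH; auto. intros; eapply Hdisj; eauto.
  - intros y Hy Hy'. apply in_flat_map in Hy' as [j [Hj Hy']].
    apply (Hdisj i j y); auto. intro; subst; auto.
Qed.

Lemma flat_map_singleton {A B} (f : A -> B) (L : list A) :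
  flat_map (fun x => [f x]) L = map f L.
Proof. induction L as [|x L IH]; simpl; f_equal; auto. Qed.

Lemma Forall_iff_ext {X} (P Q : X -> Prop) (L : list X) :
  (forall x, In x L -> (P x <-> Q x)) -> (Forall P L <-> Forall Q L).
Proof. rewrite !Forall_forall. intros HPQ; split; intros HL x Hx; apply HPQ; auto. Qed.

Open Scope R_scope.

(** * Independent random subsets of a list *)

Definition subset_prob (l : list pt) (p : R) (E : list pt -> Prop) : R :=
  fold_right Rplus 0
    (map (fun S => p ^ length S * (1 - p) ^ (length l - length S) * indicator (E S))
         (sublists l)).

Lemma probT_eq h p E : probT h p E = subset_prob (rays_upto h) p E.
Proof. reflexivity. Qed.

Lemma fold_Rplus_map_app {A} (f : A -> R) (L M : list A) :
  fold_right Rplus 0 (map f (L ++ M)) =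
  fold_right Rplus 0 (map f L) + fold_right Rplus 0 (map f M).
Proof. induction L as [|x L IH]; simpl; [lra | rewrite IH; lra]. Qed.

Lemma fold_Rplus_map_scal {A} c (f : A -> R) (L : list A) :
  fold_right Rplus 0 (map (fun x => c * f x) L) = c * fold_right Rplus 0 (map f L).
Proof. induction L as [|x L IH]; simpl; [lra | rewrite IH; lra]. Qed.

Lemma sublists_length (l S : list pt) : In S (sublists l) -> (length S <= length l)%nat.
Proof.
  revert S; induction l as [|x l IH]; simpl; intros S HS.
  - destruct HS as [<-|[]]; simpl; lia.
  - apply in_app_or in HS as [HS|HS].
    + apply in_map_iff in HS as [S' [<- HS']]. simpl. specialize (IH _ HS'); lia.
    + specialize (IH _ HS); lia.
Qed.

Lemma subset_prob_nil p E : subset_prob [] p E = indicator (E []).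
Proof. unfold subset_prob; simpl. lra. Qed.

Lemma subset_prob_cons x l p E :
  subset_prob (x :: l) p E =
  p * subset_prob l p (fun S => E (x :: S)) + (1 - p) * subset_prob l p E.
Proof.
  unfold subset_prob. simpl sublists.
  rewrite fold_Rplus_map_app, map_map, <- !fold_Rplus_map_scal. f_equal.
  - f_equal. apply map_ext. intros S. simpl. ring.
  - f_equal. apply map_ext_in. intros S HS. apply sublists_length in HS. simpl length.
    replace (Datatypes.S (length l) - length S)%nat with (Datatypes.S (length l - length S))
      by lia.
    simpl. ring.
Qed.

Lemma indicator_true (P : Prop) : P -> indicator P = 1.
Proof. unfold indicator; destruct excluded_middle_informative; tauto. Qed.

Lemma indicator_false (P : Prop) : ~ P -> indicator P = 0.
Proof. unfold indicator; destruct excluded_middle_informative; tauto. Qed.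

Lemma indicator_iff (P Q : Prop) : (P <-> Q) -> indicator P = indicator Q.
Proof.
  intros HPQ; destruct (classic P).
  - rewrite !indicator_true; tauto.
  - rewrite !indicator_false; tauto.
Qed.

Lemma indicator_range (P : Prop) : 0 <= indicator P <= 1.
Proof. unfold indicator; destruct excluded_middle_informative; lra. Qed.

Lemma incl_cons_cons (x : pt) S l : incl S l -> incl (x :: S) (x :: l).
Proof. intros HS y [<-|Hy]; [left | right; apply HS]; auto. Qed.

Lemma subset_prob_ext l p E F :
  (forall S, incl S l -> (E S <-> F S)) -> subset_prob l p E = subset_prob l p F.
Proof.
  revert E F; induction l as [|x l IH]; intros E F HEF.
  - rewrite !subset_prob_nil. apply indicator_iff, HEF, incl_nil_l.
  - rewrite !subset_prob_cons. f_equal; f_equal; apply IH; intros S HS; apply HEF.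
    + apply incl_cons_cons; auto.
    + apply incl_tl; auto.
Qed.

Lemma subset_prob_mono l p E F : 0 <= p <= 1 ->
  (forall S, incl S l -> E S -> F S) -> subset_prob l p E <= subset_prob l p F.
Proof.
  intros Hp; revert E F; induction l as [|x l IH]; intros E F HEF.
  - rewrite !subset_prob_nil. destruct (classic (E [])) as [HE|HE].
    + rewrite !indicator_true; [lra | apply (HEF [] (incl_nil_l _)) | ]; auto.
    + rewrite (indicator_false _ HE). apply indicator_range.
  - rewrite !subset_prob_cons.
    assert (subset_prob l p (fun S => E (x :: S)) <= subset_prob l p (fun S => F (x :: S)))
      by (apply IH; intros S HS; apply HEF, incl_cons_cons; auto).
    assert (subset_prob l p E <= subset_prob l p F)
      by (apply IH; intros S HS; apply HEF, incl_tl; auto).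
    nra.
Qed.

Lemma subset_prob_true l p : subset_prob l p (fun _ => True) = 1.
Proof.
  induction l as [|x l IH].
  - rewrite subset_prob_nil, indicator_true; auto.
  - rewrite subset_prob_cons, IH. ring.
Qed.

Lemma subset_prob_split l p E F :
  subset_prob l p (fun S => E S /\ F S) + subset_prob l p (fun S => E S /\ ~ F S) =
  subset_prob l p E.
Proof.
  revert E F; induction l as [|x l IH]; intros E F.
  - rewrite !subset_prob_nil.
    destruct (classic (E [])); destruct (classic (F [])).
    + rewrite (indicator_true (E [] /\ F [])), (indicator_false (E [] /\ ~ F [])),
        indicator_true; tauto || lra.
    + rewrite (indicator_false (E [] /\ F [])), (indicator_true (E [] /\ ~ F [])),
        indicator_true; tauto || lra.
    + rewrite (indicator_false (E [] /\ F [])), (indicator_false (E [] /\ ~ F [])),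
        indicator_false; tauto || lra.
    + rewrite (indicator_false (E [] /\ F [])), (indicator_false (E [] /\ ~ F [])),
        indicator_false; tauto || lra.
  - rewrite !subset_prob_cons, <- (IH (fun S => E (x :: S)) (fun S => F (x :: S))),
      <- (IH E F).
    ring.
Qed.

Lemma subset_prob_compl l p E : subset_prob l p E + subset_prob l p (fun S => ~ E S) = 1.
Proof.
  rewrite <- (subset_prob_true l p), <- (subset_prob_split l p (fun _ => True) E).
  f_equal; apply subset_prob_ext; tauto.
Qed.

Lemma subset_prob_compl_ge l p E c :
  subset_prob l p E <= c -> 1 - c <= subset_prob l p (fun S => ~ E S).
Proof. pose proof (subset_prob_compl l p E). lra. Qed.

Lemma subset_prob_ge0 l p E : 0 <= p <= 1 -> 0 <= subset_prob l p E.
Proof.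
  intros Hp; revert E; induction l as [|x l IH]; intros E.
  - rewrite subset_prob_nil. apply indicator_range.
  - rewrite subset_prob_cons.
    pose proof (IH (fun S => E (x :: S))). pose proof (IH E). nra.
Qed.

Lemma subset_prob_le1 l p E : 0 <= p <= 1 -> subset_prob l p E <= 1.
Proof.
  intros Hp. pose proof (subset_prob_compl l p E).
  pose proof (subset_prob_ge0 l p (fun S => ~ E S) Hp). lra.
Qed.

Definition depends_on (A : list pt) (E : list pt -> Prop) : Prop :=
  forall S S', (forall y, In y A -> (In y S <-> In y S')) -> (E S <-> E S').

Lemma depends_on_cons_notin A E x :
  depends_on A E -> ~ In x A -> forall S, E (x :: S) <-> E S.
Proof. intros HE Hx S. apply HE. intros y Hy. simpl. split; [intros [<-|?]|]; tauto. Qed.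

Lemma depends_on_cons A E x : depends_on A E -> depends_on A (fun S => E (x :: S)).
Proof. intros HE S S' HS. apply HE. intros y Hy. simpl. specialize (HS y Hy). tauto. Qed.

Lemma depends_on_in A y : In y A -> depends_on A (fun S => In y S).
Proof. intros Hy S S' HS. apply HS; auto. Qed.

Lemma depends_on_not A E : depends_on A E -> depends_on A (fun S => ~ E S).
Proof. intros HE S S' HS. specialize (HE S S' HS). tauto. Qed.

Lemma depends_on_Forall {X} (I : list X) (ev : X -> list pt -> Prop) (dp : X -> list pt) :
  (forall i, In i I -> depends_on (dp i) (ev i)) ->
  depends_on (flat_map dp I) (fun S => Forall (fun i => ev i S) I).
Proof.
  induction I as [|i I IH]; intros Hdep S S' HS.
  - split; constructor.
  - simpl in HS. rewrite !Forall_cons_iff.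
    assert (ev i S <-> ev i S').
    { apply (Hdep i (or_introl eq_refl)). intros y Hy; apply HS, in_or_app; auto. }
    assert (Forall (fun i => ev i S) I <-> Forall (fun i => ev i S') I).
    { apply IH; [intros; apply Hdep; right; auto|].
      intros y Hy; apply HS, in_or_app; auto. }
    tauto.
Qed.

Lemma subset_prob_indep l p E F A B : depends_on A E -> depends_on B F ->
  (forall x, In x l -> In x A -> In x B -> False) ->
  subset_prob l p (fun S => E S /\ F S) = subset_prob l p E * subset_prob l p F.
Proof.
  revert E F; induction l as [|x l IH]; intros E F HE HF Hdisj.
  - rewrite !subset_prob_nil. destruct (classic (E [])); destruct (classic (F [])).
    + rewrite !indicator_true; tauto || lra.
    + rewrite (indicator_false (E [] /\ F [])), (indicator_false (F [])); tauto || lra.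
    + rewrite (indicator_false (E [] /\ F [])), (indicator_false (E [])); tauto || lra.
    + rewrite (indicator_false (E [] /\ F [])), (indicator_false (E [])); tauto || lra.
  - assert (Hdisj' : forall y, In y l -> In y A -> In y B -> False)
      by (intros y Hy; apply Hdisj; right; auto).
    rewrite !subset_prob_cons,
      (IH (fun S => E (x :: S)) (fun S => F (x :: S))), (IH E F);
      auto using depends_on_cons.
    destruct (classic (In x A)) as [HA|HA].
    + assert (HB : ~ In x B) by (intro; eapply Hdisj; eauto; left; auto).
      rewrite (subset_prob_ext l p (fun S => F (x :: S)) F)
        by (intros; apply (depends_on_cons_notin B); auto).
      ring.
    + rewrite (subset_prob_ext l p (fun S => E (x :: S)) E)
        by (intros; apply (depends_on_cons_notin A); auto).
      ring.
Qed.

Lemma subset_prob_in l p y : NoDup l -> In y l -> subset_prob l p (fun S => In y S) = p.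
Proof.
  induction l as [|x l IH]; intros Hnd Hy; [destruct Hy|].
  inversion Hnd as [|? ? Hx Hl]; subst. rewrite subset_prob_cons.
  destruct (classic (y = x)) as [->|Hne].
  - rewrite (subset_prob_ext l p (fun S => In x (x :: S)) (fun _ => True))
      by (intros; simpl; tauto).
    rewrite (subset_prob_ext l p (fun S => In x S) (fun S => ~ True)).
    + pose proof (subset_prob_compl l p (fun _ => True)) as Hc.
      rewrite subset_prob_true in Hc |- *.
      replace (subset_prob l p (fun _ => ~ True)) with 0 by lra. ring.
    + intros S HS; split; [intros HxS _; apply Hx, HS; auto | tauto].
  - destruct Hy as [->|Hy]; [congruence|].
    rewrite (subset_prob_ext l p (fun S => In y (x :: S)) (fun S => In y S)).
    + rewrite IH; auto. ring.
    + intros S _; simpl; split; [intros [->|?]; [congruence | auto] | auto].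
Qed.

Lemma subset_prob_notin l p y :
  NoDup l -> In y l -> subset_prob l p (fun S => ~ In y S) = 1 - p.
Proof.
  intros Hnd Hy. pose proof (subset_prob_compl l p (fun S => In y S)) as Hc.
  rewrite subset_prob_in in Hc; auto. lra.
Qed.

Lemma subset_prob_Forall {X} l p (I : list X) (ev : X -> list pt -> Prop)
    (dp : X -> list pt) :
  (forall i, In i I -> depends_on (dp i) (ev i)) -> NoDup (flat_map dp I) ->
  subset_prob l p (fun S => Forall (fun i => ev i S) I) =
  fold_right Rmult 1 (map (fun i => subset_prob l p (ev i)) I).
Proof.
  induction I as [|i I IH]; intros Hdep Hnd.
  - simpl. rewrite <- (subset_prob_true l p). apply subset_prob_ext; intros; split; auto.
  - simpl in Hnd |- *.
    rewrite (subset_prob_ext l p _ (fun S => ev i S /\ Forall (fun i => ev i S) I))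
      by (intros; apply Forall_cons_iff).
    rewrite (subset_prob_indep l p _ _ (dp i) (flat_map dp I)).
    + rewrite IH; auto; [intros; apply Hdep; right; auto | eapply NoDup_app_remove_l; eauto].
    + apply Hdep; left; auto.
    + apply depends_on_Forall. intros; apply Hdep; right; auto.
    + intros x _ H1 H2. eapply NoDup_app_disj; eauto.
Qed.

Lemma subset_prob_Forall_const {X} l p (I : list X) (ev : X -> list pt -> Prop)
    (dp : X -> list pt) c :
  (forall i, In i I -> depends_on (dp i) (ev i)) -> NoDup (flat_map dp I) ->
  (forall i, In i I -> subset_prob l p (ev i) = c) ->
  subset_prob l p (fun S => Forall (fun i => ev i S) I) = c ^ length I.
Proof.
  intros Hdep Hnd Hc. rewrite (subset_prob_Forall l p I ev dp); auto. clear Hdep Hnd.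
  induction I as [|i I IH]; simpl; auto.
  rewrite Hc, IH; auto; [intros; apply Hc; right | left]; auto.
Qed.

Definition literal (yb : pt * bool) (S : list pt) : Prop :=
  if snd yb then In (fst yb) S else ~ In (fst yb) S.

Definition literal_prob (p : R) (b : bool) : R := if b then p else 1 - p.

Lemma subset_prob_literals l p (L : list (pt * bool)) :
  NoDup l -> NoDup (map fst L) -> incl (map fst L) l ->
  subset_prob l p (fun S => Forall (fun yb => literal yb S) L) =
  fold_right Rmult 1 (map (fun yb => literal_prob p (snd yb)) L).
Proof.
  intros Hl HL Hincl.
  rewrite (subset_prob_Forall l p L literal (fun yb => [fst yb])).
  - f_equal. apply map_ext_in. intros [y b] Hyb.
    assert (Hy : In y l) by (apply Hincl, in_map_iff; exists (y, b); auto).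
    unfold literal, literal_prob; destruct b; simpl.
    + apply subset_prob_in; auto.
    + apply subset_prob_notin; auto.
  - intros [y b] _. unfold literal; destruct b; simpl.
    + apply depends_on_in; left; auto.
    + apply depends_on_not, depends_on_in; left; auto.
  - rewrite flat_map_singleton; auto.
Qed.

Lemma subset_prob_all_in l p R : NoDup l -> NoDup R -> incl R l ->
  subset_prob l p (fun S => Forall (fun r => In r S) R) = p ^ length R.
Proof.
  intros Hl HR Hincl.
  apply (subset_prob_Forall_const l p R (fun r S => In r S) (fun r => [r])).
  - intros; apply depends_on_in; left; auto.
  - rewrite flat_map_singleton, map_id; auto.
  - intros; apply subset_prob_in; auto.
Qed.

Lemma subset_prob_all_out l p R : NoDup l -> NoDup R -> incl R l ->
  subset_prob l p (fun S => Forall (fun r => ~ In r S) R) = (1 - p) ^ length R.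
Proof.
  intros Hl HR Hincl.
  apply (subset_prob_Forall_const l p R (fun r S => ~ In r S) (fun r => [r])).
  - intros; apply depends_on_not, depends_on_in; left; auto.
  - rewrite flat_map_singleton, map_id; auto.
  - intros; apply subset_prob_notin; auto.
Qed.

Open Scope Z_scope.

(** * Lattice geometry *)

Lemma in_zrange h z : In z (zrange h) <-> - Z.of_nat h <= z <= Z.of_nat h.
Proof.
  unfold zrange. rewrite in_map_iff. split.
  - intros [i [<- Hi]]. apply in_seq in Hi. lia.
  - intros Hz. exists (Z.to_nat (z + Z.of_nat h)). split.
    + rewrite Z2Nat.id; lia.
    + apply in_seq. lia.
Qed.

Lemma rays_upto_prod h :
  rays_upto h = filter (fun u : pt => Z.eqb (Z.gcd (fst u) (snd u)) 1)
                  (list_prod (zrange h) (zrange h)).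
Proof. unfold rays_upto. now rewrite list_prod_as_flat_map. Qed.

Lemma in_rays h (z : pt) : In z (rays_upto h) <->
  - Z.of_nat h <= fst z <= Z.of_nat h /\ - Z.of_nat h <= snd z <= Z.of_nat h /\
  Z.gcd (fst z) (snd z) = 1.
Proof.
  destruct z as [x y]. rewrite rays_upto_prod, filter_In. unfold pt.
  rewrite in_prod_iff, !in_zrange, Z.eqb_eq. simpl. tauto.
Qed.

Lemma NoDup_rays h : NoDup (rays_upto h).
Proof.
  rewrite rays_upto_prod. apply NoDup_filter, NoDup_list_prod;
    unfold zrange; (apply NoDup_map_inj; [intros a b E; lia | apply seq_NoDup]).
Qed.

Lemma rays_upto_length h : (length (rays_upto h) <= (2 * h + 1) * (2 * h + 1))%nat.
Proof.
  rewrite rays_upto_prod. eapply Nat.le_trans; [apply filter_length_le|].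
  unfold pt. rewrite length_prod. unfold zrange. rewrite length_map, length_seq. lia.
Qed.

Lemma det_self (u : pt) : det u u = 0.
Proof. destruct u; unfold det; simpl; ring. Qed.

Lemma det_plucker u x y m : det u x * det y m = det u y * det x m + det u m * det y x.
Proof. destruct u, x, y, m; unfold det; simpl; ring. Qed.

Lemma cramer_fst u1 u2 w1 w2 z1 z2 :
  det (u1,u2) (w1,w2) * z1 = det (z1,z2) (w1,w2) * u1 + det (u1,u2) (z1,z2) * w1.
Proof. unfold det; simpl; ring. Qed.

Lemma cramer_snd u1 u2 w1 w2 z1 z2 :
  det (u1,u2) (w1,w2) * z2 = det (z1,z2) (w1,w2) * u2 + det (u1,u2) (z1,z2) * w2.
Proof. unfold det; simpl; ring. Qed.

Lemma primitive_of_det1_r (u z : pt) : det u z = 1 -> Z.gcd (fst z) (snd z) = 1.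
Proof.
  destruct u as [u1 u2], z as [z1 z2]; unfold det; simpl; intros Hd.
  assert (Hdiv : (Z.gcd z1 z2 | 1)).
  { rewrite <- Hd. apply Z.divide_sub_r; apply Z.divide_mul_r;
      [apply Z.gcd_divide_r | apply Z.gcd_divide_l]. }
  apply Z.divide_1_r in Hdiv. pose proof (Z.gcd_nonneg z1 z2). lia.
Qed.

Lemma primitive_of_det1_l (u z : pt) : det z u = 1 -> Z.gcd (fst z) (snd z) = 1.
Proof.
  destruct u as [u1 u2], z as [z1 z2]; intros Hd.
  apply (primitive_of_det1_r (- u1, - u2)). unfold det in *; simpl in *; lia.
Qed.

Lemma primitive_pos_mult c a b : Z.gcd (c * a) (c * b) = 1 -> c > 0 -> c = 1.
Proof.
  intros Hg Hc. assert (Hdiv : (c | Z.gcd (c * a) (c * b)))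
    by (apply Z.gcd_greatest; apply Z.divide_factor_l).
  rewrite Hg in Hdiv. apply Z.divide_1_r in Hdiv. lia.
Qed.

(* With [det u w = 1], a point strictly inside the cone of [u] and [w] is a
   positive integral combination of them. *)
Lemma no_box_point_between u1 u2 w1 w2 z1 z2 H :
  det (u1,u2) (w1,w2) = 1 -> 0 <= u1 -> 0 <= w1 -> u1 + w1 > H -> z1 <= H ->
  det (u1,u2) (z1,z2) > 0 -> det (z1,z2) (w1,w2) > 0 -> False.
Proof.
  intros Hd Hu Hw Hs Hz Ha Hb.
  pose proof (cramer_fst u1 u2 w1 w2 z1 z2) as C. rewrite Hd in C.
  set (a := det (z1,z2) (w1,w2)) in *. set (b := det (u1,u2) (z1,z2)) in *.
  nia.
Qed.

Lemma det_one_completion (u v : pt) : Z.gcd (fst u) (snd u) = 1 -> det u v > 0 ->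
  exists w, det u w = 1 /\ 0 <= det w v < det u v.
Proof.
  destruct u as [u1 u2], v as [v1 v2]; simpl. intros Hg Hd.
  destruct (Z.gcd_bezout _ _ _ Hg) as [a [b Hab]].
  set (d := det (u1,u2) (v1,v2)) in *.
  set (c0 := det (-b, a) (v1,v2)).
  set (s := - (c0 / d)).
  exists (-b + s * u1, a + s * u2). split.
  - unfold det; simpl; nia.
  - replace (det (-b + s * u1, a + s * u2) (v1, v2)) with (c0 mod d).
    + apply Z.mod_pos_bound; lia.
    + rewrite (Z.mod_eq c0 d) by lia. unfold s, c0, d, det; simpl. ring.
Qed.

(* If [det u v > 1], the completion [w] of [u] lies strictly between [u] and
   [v], and [d w = r u + v] with [0 < r < d] keeps it in the box. *)
Lemma complete_fan_cone_det1 h u v :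
  In u (rays_upto h) -> In v (rays_upto h) -> det u v > 0 ->
  (forall z, In z (rays_upto h) -> ~ (det u z > 0 /\ det z v > 0)) -> det u v = 1.
Proof.
  intros Hu Hv Hd Hno.
  pose proof Hu as Hu'. pose proof Hv as Hv'.
  apply in_rays in Hu' as [Hu1 [Hu2 Hgu]]. apply in_rays in Hv' as [Hv1 [Hv2 Hgv]].
  destruct (det_one_completion u v Hgu Hd) as [[w1 w2] [Hw [Hr0 Hrd]]].
  destruct u as [u1 u2], v as [v1 v2]; simpl in *.
  set (d := det (u1,u2) (v1,v2)) in *. set (r := det (w1,w2) (v1,v2)) in *.
  pose proof (cramer_fst u1 u2 v1 v2 w1 w2) as D1.
  pose proof (cramer_snd u1 u2 v1 v2 w1 w2) as D2.
  fold d r in D1, D2. rewrite Hw in D1, D2.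
  destruct (Z.eq_dec r 0) as [Hr|Hr].
  - assert (Hdiv : (d | Z.gcd v1 v2)) by (apply Z.gcd_greatest; [exists w1 | exists w2]; lia).
    rewrite Hgv in Hdiv. apply Z.divide_1_r in Hdiv. lia.
  - destruct (Z.eq_dec d 1) as [|Hd1]; auto. exfalso.
    apply (Hno (w1, w2)); [|fold r; lia].
    apply in_rays; simpl. split; [nia | split; [nia|]].
    apply (primitive_of_det1_r (u1,u2) (w1,w2)); auto.
Qed.

Lemma first_ccw_exists (u : pt) (T : list pt) : (exists v, In v T /\ det u v > 0) ->
  exists m, In m T /\ det u m > 0 /\ forall w, In w T -> ~ (det u w > 0 /\ det w m > 0).
Proof.
  induction T as [|x T IH]; intros [v [Hv Hd]]; [destruct Hv|].
  pose proof (det_self x) as Hxx.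
  destruct (classic (exists v, In v T /\ det u v > 0)) as [HT|HT].
  - destruct (IH HT) as [m [Hm [Hum Hmin]]].
    destruct (classic (det u x > 0 /\ det x m > 0)) as [Hx|Hx].
    + exists x. split; [left; auto | split; [tauto|]].
      intros w [<-|Hw] [H1 H2]; [lia|].
      apply (Hmin w Hw). split; auto.
      pose proof (det_plucker u x w m). nia.
    + exists m. split; [right; auto | split; auto].
      intros w [<-|Hw]; auto.
  - exists x. destruct Hv as [<-|Hv]; [|exfalso; apply HT; eauto].
    split; [left; auto | split; auto].
    intros w [<-|Hw] [H1 H2]; [lia | apply HT; eauto].
Qed.

Lemma cone2_exists S u : In u S -> (exists v, In v S /\ det u v > 0) ->
  exists m, cone2 S u m.
Proof.
  intros Hu Hv. destruct (first_ccw_exists u S Hv) as [m [Hm [Hd Hmin]]].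
  exists m. repeat split; auto.
Qed.

Lemma all_rays_smooth h S :
  incl S (rays_upto h) -> Forall (fun r => In r S) (rays_upto h) -> smooth S.
Proof.
  intros Hincl Hall u v [Hu [Hv [Hd Hno]]]. rewrite Forall_forall in Hall.
  unfold sing_index. rewrite (complete_fan_cone_det1 h u v); auto.
Qed.

Lemma no_rays_smooth h S :
  incl S (rays_upto h) -> Forall (fun r => ~ In r S) (rays_upto h) -> smooth S.
Proof.
  intros Hincl Hall u v [Hu _]. rewrite Forall_forall in Hall.
  exfalso; apply (Hall u); auto.
Qed.

(** * Small rays and their neighbours *)

Definition small_ray (H K : Z) (w : pt) : Prop :=
  1 <= snd w < fst w /\ K * fst w <= H /\ Z.gcd (fst w) (snd w) = 1.

(* For a small ray [w], its neighbours [u], [v] in the complete fan of the box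
   [|x|, |y| <= H] are the unimodular partners [det u w = 1 = det w v] whose
   first coordinate lies in the last period [(H - fst w, H]]. *)
Definition cw_nbr (H : Z) (w : pt) : pt :=
  epsilon (inhabits ((0,0) : pt)) (fun u => det u w = 1 /\ H - fst w < fst u <= H).

Definition ccw_nbr (H : Z) (w : pt) : pt :=
  epsilon (inhabits ((0,0) : pt)) (fun v => det w v = 1 /\ H - fst w < fst v <= H).

Definition cw_compl (H : Z) (w : pt) : pt :=
  (fst w - fst (cw_nbr H w), snd w - snd (cw_nbr H w)).

Lemma cw_nbr_spec H K w : small_ray H K w ->
  det (cw_nbr H w) w = 1 /\ H - fst w < fst (cw_nbr H w) <= H.
Proof.
  destruct w as [a b]; unfold small_ray; simpl. intros [Hb [HK Hg]].
  unfold cw_nbr; apply epsilon_spec.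
  destruct (Z.gcd_bezout _ _ _ Hg) as [x [y Hxy]].
  set (t := (H - y) / a).
  exists (y + t * a, - x + t * b). unfold det; simpl. split; [nia|].
  pose proof (Z.mod_pos_bound (H - y) a ltac:(lia)).
  pose proof (Z.div_mod (H - y) a ltac:(lia)). fold t in H1. lia.
Qed.

Lemma ccw_nbr_spec H K w : small_ray H K w ->
  det w (ccw_nbr H w) = 1 /\ H - fst w < fst (ccw_nbr H w) <= H.
Proof.
  destruct w as [a b]; unfold small_ray; simpl. intros [Hb [HK Hg]].
  unfold ccw_nbr; apply epsilon_spec.
  destruct (Z.gcd_bezout _ _ _ Hg) as [x [y Hxy]].
  set (t := (H + y) / a).
  exists (- y + t * a, x + t * b). unfold det; simpl. split; [nia|].
  pose proof (Z.mod_pos_bound (H + y) a ltac:(lia)).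
  pose proof (Z.div_mod (H + y) a ltac:(lia)). fold t in H1. lia.
Qed.

Section SmallRays.

Variable h : nat.
Local Notation H := (Z.of_nat h).
Variable K : Z.
Hypothesis HK : 3 <= K.

Lemma small_ray_bounds a b : small_ray H K (a, b) -> 1 <= b < a /\ 3 * a <= H /\ Z.gcd a b = 1.
Proof. unfold small_ray; cbn [fst snd]; intros [H1 [H2 H3]]. split; [exact H1 | split; [nia | exact H3]]. Qed.

Lemma cw_nbr_coords a b : small_ray H K (a, b) ->
  exists u1 u2, cw_nbr H (a, b) = (u1, u2) /\ u1 * b - u2 * a = 1 /\
    H - a < u1 <= H /\ 0 <= u2 < u1.
Proof.
  intros Hs. pose proof (cw_nbr_spec H K _ Hs) as [Hd Hb].
  destruct (small_ray_bounds a b Hs) as [Hab [Ha _]].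
  destruct (cw_nbr H (a, b)) as [u1 u2]. exists u1, u2. unfold det in *; cbn [fst snd] in *.
  do 3 (split; [auto; lia|]). split; nia.
Qed.

Lemma ccw_nbr_coords a b : small_ray H K (a, b) ->
  exists v1 v2, ccw_nbr H (a, b) = (v1, v2) /\ a * v2 - b * v1 = 1 /\
    H - a < v1 <= H /\ 0 < v2 <= v1.
Proof.
  intros Hs. pose proof (ccw_nbr_spec H K _ Hs) as [Hd Hb].
  destruct (small_ray_bounds a b Hs) as [Hab [Ha _]].
  destruct (ccw_nbr H (a, b)) as [v1 v2]. exists v1, v2. unfold det in *; cbn [fst snd] in *.
  do 3 (split; [auto; lia|]).
  assert (v1 >= 2) by nia. assert (b * v1 <= (a - 1) * v1) by nia. split; nia.
Qed.

Lemma small_ray_sites_in_rays w : small_ray H K w ->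
  In w (rays_upto h) /\ In (cw_nbr H w) (rays_upto h) /\
  In (ccw_nbr H w) (rays_upto h) /\ In (cw_compl H w) (rays_upto h).
Proof.
  destruct w as [a b]; intros Hs.
  destruct (small_ray_bounds a b Hs) as [Hb [Ha Hg]].
  destruct (cw_nbr_coords a b Hs) as [u1 [u2 [Eu [Du Bu]]]].
  destruct (ccw_nbr_coords a b Hs) as [v1 [v2 [Ev [Dv Bv]]]].
  unfold cw_compl. rewrite Eu, Ev; cbn [fst snd]. rewrite !in_rays; cbn [fst snd].
  split; [repeat split; lia|].
  split; [split; [lia | split; [lia|]]|].
  { apply (primitive_of_det1_l (a, b) (u1, u2)). unfold det; simpl; lia. }
  split; [split; [lia | split; [lia|]]|].
  { apply (primitive_of_det1_r (a, b) (v1, v2)). unfold det; simpl; lia. }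
  split; [lia | split; [lia|]].
  apply (primitive_of_det1_r (u1, u2) (a - u1, b - u2)). unfold det; simpl; lia.
Qed.

Lemma small_ray_sites_distinct w : small_ray H K w ->
  cw_nbr H w <> w /\ ccw_nbr H w <> w /\ cw_nbr H w <> ccw_nbr H w /\
  cw_compl H w <> w /\ cw_compl H w <> cw_nbr H w.
Proof.
  destruct w as [a b]; intros Hs.
  destruct (small_ray_bounds a b Hs) as [Hb [Ha Hg]].
  destruct (cw_nbr_coords a b Hs) as [u1 [u2 [Eu [Du Bu]]]].
  destruct (ccw_nbr_coords a b Hs) as [v1 [v2 [Ev [Dv Bv]]]].
  unfold cw_compl. rewrite Eu, Ev; cbn [fst snd].
  repeat split; intro E; inversion E; subst; lia.
Qed.

Lemma small_ray_sites_cross w w' : small_ray H K w -> small_ray H K w' ->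
  cw_nbr H w <> w' /\ ccw_nbr H w <> w' /\ cw_compl H w <> w' /\
  cw_compl H w <> cw_nbr H w' /\ cw_nbr H w <> ccw_nbr H w'.
Proof.
  destruct w as [a b], w' as [a' b']. intros Hs Hs'.
  destruct (small_ray_bounds a b Hs) as [Hb [Ha Hg]].
  destruct (small_ray_bounds a' b' Hs') as [Hb' [Ha' Hg']].
  destruct (cw_nbr_coords a b Hs) as [u1 [u2 [Eu [Du Bu]]]].
  destruct (ccw_nbr_coords a b Hs) as [v1 [v2 [Ev [Dv Bv]]]].
  destruct (cw_nbr_coords a' b' Hs') as [x1 [x2 [Ex [Dx Bx]]]].
  destruct (ccw_nbr_coords a' b' Hs') as [y1 [y2 [Ey [Dy By]]]].
  unfold cw_compl. rewrite Eu, Ev, Ex, Ey. cbn [fst snd].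
  repeat split; intro E; inversion E; subst; try lia.
  (* if [cw_nbr w = ccw_nbr w'] then [w + w'] is a positive multiple of it,
     yet has a smaller first coordinate *)
  pose proof (cramer_fst y1 y2 a b a' b') as C.
  unfold det in *; cbn [fst snd] in *.
  assert (Hc : a + a' = (a' * b - b' * a) * y1) by nia.
  destruct (Z.le_gt_cases (a' * b - b' * a) 0); nia.
Qed.

Lemma cw_nbr_inj w w' : small_ray H K w -> small_ray H K w' -> cw_nbr H w = cw_nbr H w' -> w = w'.
Proof.
  destruct w as [a b], w' as [a' b']. intros Hs Hs' E.
  destruct (small_ray_bounds a b Hs) as [Hb [Ha Hg]].
  destruct (small_ray_bounds a' b' Hs') as [Hb' [Ha' Hg']].
  destruct (cw_nbr_coords a b Hs) as [u1 [u2 [Eu [Du Bu]]]].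
  destruct (cw_nbr_coords a' b' Hs') as [x1 [x2 [Ex [Dx Bx]]]].
  rewrite Eu, Ex in E. inversion E; subst x1 x2.
  destruct (Z.lt_total (det (a,b) (a',b')) 0) as [Hl|[He|Hgt]].
  - exfalso. apply (no_box_point_between u1 u2 a b a' b' H);
      unfold det in *; cbn [fst snd] in *; lia.
  - pose proof (cramer_fst u1 u2 a b a' b'). pose proof (cramer_snd u1 u2 a b a' b').
    unfold det in *; cbn [fst snd] in *. f_equal; nia.
  - exfalso. apply (no_box_point_between u1 u2 a' b' a b H);
      unfold det in *; cbn [fst snd] in *; lia.
Qed.

Lemma ccw_nbr_inj w w' :
  small_ray H K w -> small_ray H K w' -> ccw_nbr H w = ccw_nbr H w' -> w = w'.
Proof.
  destruct w as [a b], w' as [a' b']. intros Hs Hs' E.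
  destruct (small_ray_bounds a b Hs) as [Hb [Ha Hg]].
  destruct (small_ray_bounds a' b' Hs') as [Hb' [Ha' Hg']].
  destruct (ccw_nbr_coords a b Hs) as [v1 [v2 [Ev [Dv Bv]]]].
  destruct (ccw_nbr_coords a' b' Hs') as [x1 [x2 [Ex [Dx Bx]]]].
  rewrite Ev, Ex in E. inversion E; subst x1 x2.
  destruct (Z.lt_total (det (a,b) (a',b')) 0) as [Hl|[He|Hgt]].
  - exfalso. apply (no_box_point_between a' b' v1 v2 a b H);
      unfold det in *; cbn [fst snd] in *; lia.
  - pose proof (cramer_fst a b v1 v2 a' b'). pose proof (cramer_snd a b v1 v2 a' b').
    unfold det in *; cbn [fst snd] in *. f_equal; nia.
  - exfalso. apply (no_box_point_between a b v1 v2 a' b' H);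
      unfold det in *; cbn [fst snd] in *; lia.
Qed.

Lemma cw_compl_inj w w' :
  small_ray H K w -> small_ray H K w' -> cw_compl H w = cw_compl H w' -> w = w'.
Proof.
  destruct w as [a b], w' as [a' b']. intros Hs Hs' E.
  destruct (small_ray_bounds a b Hs) as [Hb [Ha Hg]].
  destruct (small_ray_bounds a' b' Hs') as [Hb' [Ha' Hg']].
  destruct (cw_nbr_coords a b Hs) as [u1 [u2 [Eu [Du Bu]]]].
  destruct (cw_nbr_coords a' b' Hs') as [x1 [x2 [Ex [Dx Bx]]]].
  unfold cw_compl in E. rewrite Eu, Ex in E. cbn [fst snd] in E. inversion E as [[E1 E2]].
  set (z1 := a - u1) in *. set (z2 := b - u2) in *.
  (* [z := w - cw_nbr w] satisfies [det z w = det z w' = -1], so [w - w'] is a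
     multiple [c z] of [z]; comparing first coordinates forces [c = 0]. *)
  pose proof (cramer_fst z1 z2 a b a' b'). pose proof (cramer_snd z1 z2 a b a' b').
  unfold det in *; cbn [fst snd] in *.
  set (c := a' * b - b' * a) in *.
  assert (Hz : z1 * b - z2 * a = -1) by (unfold z1, z2; nia).
  assert (Hz' : z1 * b' - z2 * a' = -1) by (unfold z1, z2; nia).
  rewrite Hz, Hz' in *.
  assert (Hz1 : z1 < - a) by (unfold z1; lia).
  assert (c = 0).
  { destruct (Z.le_gt_cases c 0) as [Hc0|Hc0]; [destruct (Z.le_gt_cases 0 c) as [Hc1|Hc1]|].
    - lia.
    - assert (c * z1 >= (-1) * z1) by (apply Z.le_ge, Z.mul_le_mono_nonpos_r; lia). lia.
    - assert (c * z1 <= 1 * z1) by (apply Z.mul_le_mono_nonpos_r; lia). lia. }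
  f_equal; nia.
Qed.

Lemma missing_small_ray_cone w S : small_ray H K w -> incl S (rays_upto h) ->
  In (cw_nbr H w) S -> In (ccw_nbr H w) S -> ~ In w S ->
  cone2 S (cw_nbr H w) (ccw_nbr H w) /\
  sing_index (cw_nbr H w) (ccw_nbr H w) > 2 * (K - 1).
Proof.
  destruct w as [a b]. intros Hs Hincl Hu Hv Hw.
  destruct (small_ray_bounds a b Hs) as [Hb [Ha Hg]].
  destruct (cw_nbr_coords a b Hs) as [u1 [u2 [Eu [Du Bu]]]].
  destruct (ccw_nbr_coords a b Hs) as [v1 [v2 [Ev [Dv Bv]]]].
  rewrite Eu, Ev in *.
  set (m := det (u1,u2) (v1,v2)).
  (* [v = m w - u]: [m] is large because [u] and [v] both have first coordinate
     about [H] while [w] is short. *)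
  assert (Hv1 : v1 = - u1 + m * a)
    by (pose proof (cramer_fst u1 u2 a b v1 v2); unfold m, det in *; cbn [fst snd] in *; nia).
  assert (Hm : m > 2 * (K - 1)) by (unfold small_ray in Hs; cbn [fst snd] in Hs; nia).
  split; [|unfold sing_index; fold m; lia].
  repeat split; auto; [lia|].
  intros [z1 z2] Hz [Hz1 Hz2].
  pose proof (Hincl _ Hz) as Hzb. apply in_rays in Hzb; cbn [fst snd] in Hzb. destruct Hzb as [Hzb1 [Hzb2 Hzg]].
  destruct (Z.lt_total (det (z1,z2) (a,b)) 0) as [Hl|[He|Hgt]].
  - apply (no_box_point_between a b v1 v2 z1 z2 H); unfold det in *; cbn [fst snd] in *; lia.
  - pose proof (cramer_fst u1 u2 a b z1 z2). pose proof (cramer_snd u1 u2 a b z1 z2).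
    assert (Hd1 : det (u1,u2) (a,b) = 1) by (unfold det; simpl; lia).
    rewrite Hd1, He in *.
    set (c := det (u1,u2) (z1,z2)) in *.
    assert (c = 1).
    { apply (primitive_pos_mult c a b); [|lia].
      replace (c * a) with z1 by lia. replace (c * b) with z2 by lia. auto. }
    apply Hw. replace a with z1 by lia. replace b with z2 by lia. auto.
  - apply (no_box_point_between u1 u2 a b z1 z2 H); unfold det in *; cbn [fst snd] in *; lia.
Qed.

(* The cone of [S] starting at [u = cw_nbr w] ends at some [v] with [det u v = 1];
   then [w - v] is a multiple of [u], and the box forces [v = w] or [v = w - u]. *)
Lemma missing_small_ray_singular w S : small_ray H K w -> incl S (rays_upto h) ->
  In (cw_nbr H w) S -> ~ In w S -> ~ In (cw_compl H w) S ->
  (exists r, In r S /\ det (cw_nbr H w) r > 0) -> ~ smooth S.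
Proof.
  destruct w as [a b]. intros Hs Hincl Hu Hw Hwu Hr Hsm.
  destruct (small_ray_bounds a b Hs) as [Hb [Ha Hg]].
  destruct (cw_nbr_coords a b Hs) as [u1 [u2 [Eu [Du Bu]]]].
  unfold cw_compl in Hwu. rewrite Eu in *; cbn [fst snd] in Hwu.
  destruct (cone2_exists S _ Hu Hr) as [[v1 v2] Hc].
  pose proof (Hsm _ _ Hc) as H1. unfold sing_index in H1.
  destruct Hc as [_ [HvS [Hpos _]]].
  assert (Hd : det (u1,u2) (v1,v2) = 1) by lia.
  pose proof (cramer_fst u1 u2 a b v1 v2) as C1. pose proof (cramer_snd u1 u2 a b v1 v2) as C2.
  assert (Hd1 : det (u1,u2) (a,b) = 1) by (unfold det; simpl; lia).
  rewrite Hd1, Hd in C1, C2.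
  set (t := det (v1,v2) (a,b)) in *.
  pose proof (Hincl _ HvS) as HvR. apply in_rays in HvR as [Hv1 [Hv2 _]]; cbn [fst snd] in *.
  destruct (Z.lt_total t 0) as [Ht|[Ht|Ht]].
  - destruct (Z.eq_dec t (-1)) as [Ht1|Ht1]; [|nia].
    apply Hwu. replace (a - u1) with v1 by lia. replace (b - u2) with v2 by lia. auto.
  - apply Hw. replace a with v1 by lia. replace b with v2 by lia. auto.
  - nia.
Qed.

End SmallRays.

(** * Counting coprime pairs *)

Definition coprime_pairs (n : nat) : list (nat * nat) :=
  filter (fun xy => Z.eqb (Z.gcd (Z.of_nat (fst xy)) (Z.of_nat (snd xy))) 1)
    (list_prod (seq 1 n) (seq 1 n)).

Lemma in_coprime_pairs n a b : In (a, b) (coprime_pairs n) ->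
  (1 <= a <= n)%nat /\ (1 <= b <= n)%nat /\ Z.gcd (Z.of_nat a) (Z.of_nat b) = 1%Z.
Proof. unfold coprime_pairs. rewrite filter_In, in_prod_iff, !in_seq, Z.eqb_eq. simpl. lia. Qed.

Lemma NoDup_coprime_pairs n : NoDup (coprime_pairs n).
Proof. apply NoDup_filter, NoDup_list_prod; apply seq_NoDup. Qed.

Open Scope nat_scope.

Lemma list_sum_map_add {X} (D : list X) F G :
  list_sum (map (fun d => F d + G d) D) = list_sum (map F D) + list_sum (map G D).
Proof. induction D; simpl; lia. Qed.

Lemma list_sum_map_ge1 {X} (D : list X) (F : X -> nat) d :
  In d D -> 1 <= F d -> 1 <= list_sum (map F D).
Proof.
  induction D as [|x D IH]; simpl; intros Hd HF; [destruct Hd | destruct Hd as [->|Hd]]; [lia|].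
  specialize (IH Hd HF); lia.
Qed.

Lemma list_sum_map_le {X} (D : list X) F G :
  (forall d, In d D -> F d <= G d) -> list_sum (map F D) <= list_sum (map G D).
Proof.
  induction D as [|x D IH]; simpl; intros HFG; auto.
  pose proof (HFG x (or_introl eq_refl)).
  assert (list_sum (map F D) <= list_sum (map G D)) by (apply IH; auto). lia.
Qed.

Lemma length_filter_union_bound {X Y} (L : list X) (D : list Y) f (g : Y -> X -> bool) :
  (forall x, In x L -> f x = true -> exists d, In d D /\ g d x = true) ->
  length (filter f L) <= list_sum (map (fun d => length (filter (g d) L)) D).
Proof.
  induction L as [|x L IH]; intros Hcov; simpl.
  - induction D; simpl; lia.
  - specialize (IH (fun y Hy => Hcov y (or_intror Hy))).
    rewrite (map_ext (fun d => length (filter (g d) (x :: L)))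
               (fun d => (if g d x then 1 else 0) + length (filter (g d) L)))
      by (intros d; simpl; destruct (g d x); reflexivity).
    rewrite list_sum_map_add.
    destruct (f x) eqn:Ef; simpl; [|lia].
    destruct (Hcov x (or_introl eq_refl) Ef) as [d [Hd Hg]].
    assert (1 <= list_sum (map (fun d => if g d x then 1 else 0) D))
      by (apply (list_sum_map_ge1 D _ d Hd); rewrite Hg; lia).
    lia.
Qed.

Lemma length_filter_list_prod {X Y} (A : list X) (B : list Y) f g :
  length (filter (fun xy => f (fst xy) && g (snd xy)) (list_prod A B)) =
  length (filter f A) * length (filter g B).
Proof.
  induction A as [|x A IH]; simpl; auto.
  rewrite filter_app, length_app, IH.
  replace (length (filter (fun xy => f (fst xy) && g (snd xy)) (map (fun y => (x, y)) B)))
    with (if f x then length (filter g B) else 0); [destruct (f x); simpl; lia|].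
  clear. induction B as [|y B IH]; simpl; [destruct (f x); auto|].
  destruct (f x), (g y); simpl; rewrite <- IH; auto.
Qed.

Lemma length_filter_multiples n d : 1 <= d ->
  length (filter (fun a => a mod d =? 0) (seq 1 n)) <= n / d.
Proof.
  intros Hd. induction n as [|n IH]; [simpl; lia|].
  rewrite seq_S, filter_app, length_app. simpl.
  assert (n / d <= S n / d) by (apply Nat.Div0.div_le_mono; lia).
  destruct (S n mod d =? 0) eqn:E; simpl; [|lia].
  apply Nat.eqb_eq in E.
  assert (d * (n / d) <= n) by apply Nat.Div0.mul_div_le.
  pose proof (Nat.div_mod (S n) d ltac:(lia)) as Hdm. rewrite E in Hdm.
  assert (n / d < S n / d) by nia. lia.
Qed.

(* Union bound over the common divisors [d >= 2]. *)
Lemma non_coprime_pairs_bound n :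
  length (filter (fun xy => negb (Z.eqb (Z.gcd (Z.of_nat (fst xy)) (Z.of_nat (snd xy))) 1))
            (list_prod (seq 1 n) (seq 1 n)))
  <= list_sum (map (fun d => (n / d) * (n / d)) (seq 2 n)).
Proof.
  set (mult d := fun a => a mod d =? 0).
  eapply Nat.le_trans.
  - apply (length_filter_union_bound _ (seq 2 n) _
             (fun d xy => mult d (fst xy) && mult d (snd xy))).
    intros [a b] Hab Hf. simpl in Hf.
    apply negb_true_iff, Z.eqb_neq in Hf.
    apply in_prod_iff in Hab as [Ha Hb]. apply in_seq in Ha, Hb.
    set (g := Z.gcd (Z.of_nat a) (Z.of_nat b)) in *.
    assert (Hga : (g | Z.of_nat a)%Z) by apply Z.gcd_divide_l.
    assert (Hgb : (g | Z.of_nat b)%Z) by apply Z.gcd_divide_r.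
    assert (Hg0 : (0 < g)%Z)
      by (pose proof (Z.gcd_nonneg (Z.of_nat a) (Z.of_nat b));
          assert (g <> 0)%Z by (intro E; apply Z.gcd_eq_0_l in E; lia); lia).
    assert (Hle : (g <= Z.of_nat a)%Z) by (apply Z.divide_pos_le; auto; lia).
    exists (Z.to_nat g). split; [apply in_seq; lia|].
    unfold mult; simpl. apply andb_true_iff. split; apply Nat.eqb_eq, Nat2Z.inj;
      rewrite Nat2Z.inj_mod, Z2Nat.id by lia; apply Z.mod_divide; auto; lia.
  - apply list_sum_map_le. intros d Hd. apply in_seq in Hd.
    rewrite length_filter_list_prod.
    pose proof (length_filter_multiples n d ltac:(lia)). apply Nat.mul_le_mono; auto.
Qed.

Open Scope R_scope.

Lemma INR_list_sum_map {X} (D : list X) (F : X -> nat) :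
  INR (list_sum (map F D)) = fold_right Rplus 0 (map (fun d => INR (F d)) D).
Proof. induction D as [|x D IH]; simpl; auto. rewrite plus_INR, IH; auto. Qed.

Lemma fold_Rplus_map_le {X} (D : list X) (F G : X -> R) :
  (forall d, In d D -> F d <= G d) ->
  fold_right Rplus 0 (map F D) <= fold_right Rplus 0 (map G D).
Proof.
  induction D as [|x D IH]; simpl; intros HFG; [lra|].
  pose proof (HFG x (or_introl eq_refl)).
  assert (fold_right Rplus 0 (map F D) <= fold_right Rplus 0 (map G D)) by (apply IH; auto).
  lra.
Qed.

(* Telescoping against [1/(d-1) - 1/d]. *)
Lemma sum_inv_sq_from3 m :
  fold_right Rplus 0 (map (fun d => / (INR d * INR d)) (seq 3 m)) <= / 2 - / (INR m + 2).
Proof.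
  induction m as [|m IH]; [simpl; lra|].
  rewrite seq_S, fold_Rplus_map_app. cbn [map fold_right]. rewrite S_INR, plus_INR.
  assert (0 <= INR m) by apply pos_INR.
  replace (INR 3) with 3 by (simpl; ring).
  assert (/ ((3 + INR m) * (3 + INR m)) <= / (INR m + 2) - / (INR m + 1 + 2)).
  { replace (/ (INR m + 2) - / (INR m + 1 + 2)) with (/ ((INR m + 2) * (INR m + 3)))
      by (field; lra).
    apply Rinv_le_contravar; nra. }
  lra.
Qed.

Lemma sum_inv_sq_from2 n :
  fold_right Rplus 0 (map (fun d => / (INR d * INR d)) (seq 2 n)) <= 3 / 4.
Proof.
  destruct n as [|n]; [simpl; lra|].
  cbn [seq map fold_right]. pose proof (sum_inv_sq_from3 n).
  assert (0 <= INR n) by apply pos_INR.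
  assert (0 < / (INR n + 2)) by (apply Rinv_0_lt_compat; lra).
  simpl INR. lra.
Qed.

Lemma INR_div_le n d : (1 <= d)%nat -> INR (n / d) <= INR n / INR d.
Proof.
  intros Hd. assert (Hle : (d * (n / d) <= n)%nat) by apply Nat.Div0.mul_div_le.
  apply le_INR in Hle. rewrite mult_INR in Hle.
  assert (0 < INR d) by (apply lt_0_INR; lia).
  apply (Rmult_le_reg_l (INR d)); auto. field_simplify; lra.
Qed.

Lemma coprime_pairs_length_ge n : INR n * INR n / 4 <= INR (length (coprime_pairs n)).
Proof.
  pose proof (filter_length (fun xy => Z.eqb (Z.gcd (Z.of_nat (fst xy)) (Z.of_nat (snd xy))) 1)
                (list_prod (seq 1 n) (seq 1 n))) as Hsplit.
  rewrite length_prod, length_seq in Hsplit. fold (coprime_pairs n) in Hsplit.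
  pose proof (non_coprime_pairs_bound n) as Hbad.
  apply le_INR in Hbad. rewrite INR_list_sum_map in Hbad.
  apply (f_equal INR) in Hsplit. rewrite plus_INR, mult_INR in Hsplit.
  assert (Hsum : fold_right Rplus 0 (map (fun d => INR (n / d * (n / d))) (seq 2 n))
                 <= INR n * INR n * (3 / 4)).
  { eapply Rle_trans; [|apply Rmult_le_compat_l; [|apply sum_inv_sq_from2]];
      [|pose proof (pos_INR n); nra].
    rewrite <- fold_Rplus_map_scal. apply fold_Rplus_map_le. intros d Hd. apply in_seq in Hd.
    rewrite mult_INR. pose proof (INR_div_le n d ltac:(lia)).
    assert (0 < INR d) by (apply lt_0_INR; lia). pose proof (pos_INR (n / d)).
    replace (INR n * INR n * / (INR d * INR d)) with ((INR n / INR d) * (INR n / INR d))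
      by (field; lra).
    apply Rmult_le_compat; lra. }
  lra.
Qed.

Lemma subset_prob_no_site {X} l p (I : list X) (lits : X -> list (pt * bool)) c :
  NoDup l -> NoDup (flat_map (fun i => map fst (lits i)) I) ->
  (forall i, In i I -> incl (map fst (lits i)) l) ->
  (forall i, In i I -> fold_right Rmult 1 (map (fun yb => literal_prob p (snd yb)) (lits i)) = c) ->
  subset_prob l p (fun S => Forall (fun i => ~ Forall (fun yb => literal yb S) (lits i)) I) =
  (1 - c) ^ length I.
Proof.
  intros Hl Hnd Hincl Hc.
  apply (subset_prob_Forall_const l p I _ (fun i => map fst (lits i))); auto.
  - intros i _. apply depends_on_not. rewrite <- flat_map_singleton.
    apply depends_on_Forall. intros [y b] _. unfold literal; destruct b; simpl.
    + apply depends_on_in; left; auto.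
    + apply depends_on_not, depends_on_in; left; auto.
  - intros i Hi. rewrite <- (Hc i Hi), <- (subset_prob_literals l p); auto.
    + pose proof (subset_prob_compl l p (fun S => Forall (fun yb => literal yb S) (lits i))). lra.
    + apply (NoDup_flat_map_piece I (fun i => map fst (lits i))); auto.
Qed.

Definition small_rays (h Kn : nat) : list pt :=
  map (fun xy => (Z.of_nat (fst xy + snd xy), Z.of_nat (snd xy)))
    (coprime_pairs (h / (2 * Kn))).

Definition second_quadrant_rays (h : nat) : list pt :=
  map (fun xy => (- Z.of_nat (fst xy), Z.of_nat (snd xy))%Z) (coprime_pairs h).

Lemma small_rays_spec h Kn w :
  (1 <= Kn)%nat -> In w (small_rays h Kn) -> small_ray (Z.of_nat h) (Z.of_nat Kn) w.
Proof.
  intros HK Hw. unfold small_rays in Hw. apply in_map_iff in Hw as [[a b] [<- Hab]].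
  apply in_coprime_pairs in Hab as [Ha [Hb Hg]]. unfold small_ray; cbn [fst snd].
  assert (Hd : (2 * Kn * (h / (2 * Kn)) <= h)%nat) by apply Nat.Div0.mul_div_le.
  split; [lia | split; [nia|]].
  rewrite Nat2Z.inj_add, Z.gcd_comm, Z.gcd_add_diag_r, Z.gcd_comm. auto.
Qed.

Lemma NoDup_small_rays h Kn : NoDup (small_rays h Kn).
Proof.
  apply NoDup_map_inj; [|apply NoDup_coprime_pairs].
  intros [a b] [c d] E. inversion E. f_equal; lia.
Qed.

Lemma small_rays_length h Kn :
  length (small_rays h Kn) = length (coprime_pairs (h / (2 * Kn))).
Proof. apply length_map. Qed.

Lemma second_quadrant_rays_spec h r : In r (second_quadrant_rays h) ->
  In r (rays_upto h) /\ (fst r < 0)%Z /\ (0 < snd r)%Z.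
Proof.
  intros Hr. apply in_map_iff in Hr as [[a b] [<- Hab]].
  apply in_coprime_pairs in Hab as [Ha [Hb Hg]]. cbn [fst snd].
  split; [|lia]. apply in_rays; cbn [fst snd]. rewrite Z.gcd_opp_l. lia.
Qed.

Lemma NoDup_second_quadrant_rays h : NoDup (second_quadrant_rays h).
Proof.
  apply NoDup_map_inj; [|apply NoDup_coprime_pairs].
  intros [a b] [c d] E. inversion E. f_equal; lia.
Qed.

Lemma second_quadrant_rays_length h :
  length (second_quadrant_rays h) = length (coprime_pairs h).
Proof. apply length_map. Qed.

Section Gaps.

Variables h Kn : nat.
Hypothesis HKn : (3 <= Kn)%nat.
Local Notation H := (Z.of_nat h).
Local Notation W := (small_rays h Kn).

Definition gap_event (w : pt) (S : list pt) : Prop :=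
  In (cw_nbr H w) S /\ In (ccw_nbr H w) S /\ ~ In w S.

Definition cw_gap_event (w : pt) (S : list pt) : Prop :=
  In (cw_nbr H w) S /\ ~ In w S /\ ~ In (cw_compl H w) S.

Let Kn_ge3 : (3 <= Z.of_nat Kn)%Z.
Proof. lia. Qed.

Let small_rays_small w : In w W -> small_ray H (Z.of_nat Kn) w.
Proof. apply small_rays_spec; lia. Qed.

Lemma prob_no_gap p :
  subset_prob (rays_upto h) p (fun S => Forall (fun w => ~ gap_event w S) W) =
  (1 - p * p * (1 - p)) ^ length W.
Proof.
  set (lits w := [(cw_nbr H w, true); (ccw_nbr H w, true); (w, false)]).
  rewrite (subset_prob_ext _ _ _
             (fun S => Forall (fun w => ~ Forall (fun yb => literal yb S) (lits w)) W)).
  - apply subset_prob_no_site; [apply NoDup_rays | | |].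
    + apply NoDup_flat_map_disj; [apply NoDup_small_rays | |].
      * intros w Hw. destruct (small_ray_sites_distinct h _ Kn_ge3 w (small_rays_small w Hw))
          as [D1 [D2 [D3 _]]].
        simpl. repeat constructor; simpl; intuition.
      * intros w w' x Hw Hw' Hne Hx Hx'.
        pose proof (small_rays_small w Hw) as Hs. pose proof (small_rays_small w' Hw') as Hs'.
        destruct (small_ray_sites_cross h _ Kn_ge3 w w' Hs Hs') as [C1 [C2 [_ [_ C5]]]].
        destruct (small_ray_sites_cross h _ Kn_ge3 w' w Hs' Hs) as [C1' [C2' [_ [_ C5']]]].
        simpl in Hx, Hx'.
        destruct Hx as [<-|[<-|[<-|[]]]]; destruct Hx' as [E|[E|[E|[]]]]; auto.
        -- apply Hne, (cw_nbr_inj h _ Kn_ge3); auto.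
        -- apply Hne, (ccw_nbr_inj h _ Kn_ge3); auto.
    + intros w Hw. destruct (small_ray_sites_in_rays h _ Kn_ge3 w (small_rays_small w Hw))
        as [I1 [I2 [I3 _]]].
      intros y Hy; simpl in Hy; intuition congruence.
    + intros w _. simpl. ring.
  - intros S _. apply Forall_iff_ext. intros w _. unfold gap_event, lits, literal; simpl.
    rewrite !Forall_cons_iff, Forall_nil_iff. tauto.
Qed.

Lemma prob_no_cw_gap p :
  subset_prob (rays_upto h) p (fun S => Forall (fun w => ~ cw_gap_event w S) W) =
  (1 - p * (1 - p) * (1 - p)) ^ length W.
Proof.
  set (lits w := [(cw_nbr H w, true); (w, false); (cw_compl H w, false)]).
  rewrite (subset_prob_ext _ _ _
             (fun S => Forall (fun w => ~ Forall (fun yb => literal yb S) (lits w)) W)).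
  - apply subset_prob_no_site; [apply NoDup_rays | | |].
    + apply NoDup_flat_map_disj; [apply NoDup_small_rays | |].
      * intros w Hw. destruct (small_ray_sites_distinct h _ Kn_ge3 w (small_rays_small w Hw))
          as [D1 [_ [_ [D4 D5]]]].
        simpl. repeat constructor; simpl; intuition.
      * intros w w' x Hw Hw' Hne Hx Hx'.
        pose proof (small_rays_small w Hw) as Hs. pose proof (small_rays_small w' Hw') as Hs'.
        destruct (small_ray_sites_cross h _ Kn_ge3 w w' Hs Hs') as [C1 [_ [C3 [C4 _]]]].
        destruct (small_ray_sites_cross h _ Kn_ge3 w' w Hs' Hs) as [C1' [_ [C3' [C4' _]]]].
        simpl in Hx, Hx'.
        destruct Hx as [<-|[<-|[<-|[]]]]; destruct Hx' as [E|[E|[E|[]]]]; auto.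
        -- apply Hne, (cw_nbr_inj h _ Kn_ge3); auto.
        -- apply Hne, (cw_compl_inj h _ Kn_ge3); auto.
    + intros w Hw. destruct (small_ray_sites_in_rays h _ Kn_ge3 w (small_rays_small w Hw))
        as [I1 [I2 [_ I4]]].
      intros y Hy; simpl in Hy; intuition congruence.
    + intros w _. simpl. ring.
  - intros S _. apply Forall_iff_ext. intros w _. unfold cw_gap_event, lits, literal; simpl.
    rewrite !Forall_cons_iff, Forall_nil_iff. tauto.
Qed.

Lemma gap_event_singular w S : In w W -> incl S (rays_upto h) -> gap_event w S ->
  exists u v, cone2 S u v /\ (sing_index u v > 2 * (Z.of_nat Kn - 1))%Z.
Proof.
  intros Hw Hincl [Hu [Hv Hnw]].
  destruct (missing_small_ray_cone h _ Kn_ge3 w S (small_rays_small w Hw) Hincl Hu Hv Hnw).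
  eauto.
Qed.

(* A second-quadrant ray [r] lies counterclockwise of [cw_nbr w], which is in the
   first quadrant. *)
Lemma cw_gap_event_singular w S : In w W -> incl S (rays_upto h) -> cw_gap_event w S ->
  (exists r, In r (second_quadrant_rays h) /\ In r S) -> ~ smooth S.
Proof.
  intros Hw Hincl [Hu [Hnw Hnc]] [r [Hr HrS]].
  pose proof (small_rays_small w Hw) as Hs.
  apply (missing_small_ray_singular h _ Kn_ge3 w S Hs Hincl Hu Hnw Hnc).
  exists r. split; auto.
  destruct w as [a b], r as [r1 r2].
  destruct (cw_nbr_coords h _ Kn_ge3 a b Hs) as [u1 [u2 [Eu [_ Bu]]]].
  destruct (second_quadrant_rays_spec h _ Hr) as [_ [R1 R2]].
  rewrite Eu. unfold det; cbn [fst snd] in *. nia.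
Qed.

End Gaps.

(** * Probability estimates *)

Lemma bernoulli_ineq x n : 0 <= x <= 1 -> 1 - INR n * x <= (1 - x) ^ n.
Proof.
  intros Hx. induction n as [|n IH]; [simpl; lra|].
  rewrite S_INR. simpl.
  assert (0 <= INR n * x) by (apply Rmult_le_pos; [apply pos_INR | lra]).
  assert (0 <= (1 - x) ^ n) by (apply pow_le; lra). nra.
Qed.

Lemma pow_le_one y n : 0 <= y <= 1 -> y ^ n <= 1.
Proof.
  intros Hy; induction n as [|n IH]; simpl; [lra|].
  assert (0 <= y ^ n) by (apply pow_le; lra). nra.
Qed.

Lemma bernoulli_ineq_plus x n : 0 <= x -> 1 + INR n * x <= (1 + x) ^ n.
Proof.
  intros Hx. induction n as [|n IH]; [simpl; lra|].
  rewrite S_INR. simpl.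
  assert (0 <= INR n * x) by (apply Rmult_le_pos; [apply pos_INR | lra]). nra.
Qed.

(* [(1 - x)^n (1 + x)^n = (1 - x^2)^n <= 1]. *)
Lemma pow_one_minus_le x n : 0 <= x <= 1 -> (1 - x) ^ n <= 1 / (1 + INR n * x).
Proof.
  intros Hx. pose proof (bernoulli_ineq_plus x n ltac:(lra)).
  assert (0 <= INR n * x) by (apply Rmult_le_pos; [apply pos_INR | lra]).
  assert (P : (1 - x) ^ n * (1 + x) ^ n <= 1).
  { rewrite <- Rpow_mult_distr. replace ((1 - x) * (1 + x)) with (1 - x * x) by ring.
    apply pow_le_one. nra. }
  assert (0 <= (1 - x) ^ n) by (apply pow_le; lra).
  apply (Rmult_le_reg_r (1 + INR n * x)); [lra|].
  replace (1 / (1 + INR n * x) * (1 + INR n * x)) with 1 by (field; lra).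
  nra.
Qed.

Lemma pow_one_minus_le_weak s c n : 0 <= c <= s -> s <= 1 ->
  (1 - s) ^ n <= 1 / (1 + INR n * c).
Proof.
  intros Hc Hs. eapply Rle_trans; [apply pow_one_minus_le; lra|].
  assert (0 <= INR n) by apply pos_INR.
  apply Rmult_le_compat_l; [lra|]. apply Rinv_le_contravar; nra.
Qed.

Lemma inv_one_plus_ge0 a : 0 <= a -> 0 <= 1 / (1 + a).
Proof. intros. apply Rmult_le_pos; [lra | left; apply Rinv_0_lt_compat; lra]. Qed.

Lemma prob_smooth_ge_complete h q : 0 <= q <= 1 ->
  1 - INR ((2 * h + 1) * (2 * h + 1)) * q <= probT h (1 - q) smooth.
Proof.
  intros Hq. rewrite probT_eq.
  eapply Rle_trans;
    [|apply (subset_prob_mono _ _ (fun S => Forall (fun r => In r S) (rays_upto h)));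
      [lra | intros; apply (all_rays_smooth h); auto]].
  rewrite subset_prob_all_in; auto using NoDup_rays, incl_refl.
  eapply Rle_trans; [|apply bernoulli_ineq; lra].
  pose proof (rays_upto_length h) as Hl. apply le_INR in Hl. nra.
Qed.

Lemma prob_smooth_ge_empty h p : 0 <= p <= 1 ->
  1 - INR ((2 * h + 1) * (2 * h + 1)) * p <= probT h p smooth.
Proof.
  intros Hp. rewrite probT_eq.
  eapply Rle_trans;
    [|apply (subset_prob_mono _ _ (fun S => Forall (fun r => ~ In r S) (rays_upto h)));
      auto; intros; apply (no_rays_smooth h); auto].
  rewrite subset_prob_all_out; auto using NoDup_rays, incl_refl.
  eapply Rle_trans; [|apply bernoulli_ineq; lra].
  pose proof (rays_upto_length h) as Hl. apply le_INR in Hl. nra.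
Qed.

Section Bounds.

Variable h : nat.
Local Notation rays := (rays_upto h).

Lemma prob_smooth_le_high p : 1 / 2 <= p <= 1 ->
  subset_prob rays p smooth <= 1 / (1 + INR (length (small_rays h 3)) * ((1 - p) / 4)).
Proof.
  intros Hp.
  eapply Rle_trans;
    [apply (subset_prob_mono _ _ _ (fun S => Forall (fun w => ~ gap_event h w S) (small_rays h 3)));
     [lra|]|].
  - intros S Hincl Hsm. apply Forall_forall. intros w Hw Hgap.
    destruct (gap_event_singular h 3 ltac:(lia) w S Hw Hincl Hgap) as [u [v [Hc Hidx]]].
    apply Hsm in Hc. lia.
  - rewrite prob_no_gap by lia.
    assert (1 / 4 <= p * p) by nra.
    apply pow_one_minus_le_weak; [split|]; nra.
Qed.

(* A smooth fan either has no second-quadrant ray, or has no [cw_gap_event]. *)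
Lemma prob_smooth_le_low p : 0 <= p <= 1 / 2 ->
  subset_prob rays p smooth <=
  1 / (1 + INR (length (small_rays h 3)) * (p / 4)) +
  1 / (1 + INR (length (coprime_pairs h)) * p).
Proof.
  intros Hp.
  set (Q := second_quadrant_rays h).
  rewrite <- (subset_prob_split _ p smooth (fun S => exists r, In r Q /\ In r S)).
  apply Rplus_le_compat.
  - eapply Rle_trans;
      [apply (subset_prob_mono _ _ _
                (fun S => Forall (fun w => ~ cw_gap_event h w S) (small_rays h 3))); [lra|]|].
    + intros S Hincl [Hsm HQ]. apply Forall_forall. intros w Hw Hgap.
      apply (cw_gap_event_singular h 3 ltac:(lia) w S Hw Hincl Hgap HQ Hsm).
    + rewrite prob_no_cw_gap by lia.
      assert (1 / 4 <= (1 - p) * (1 - p)) by nra.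
      apply pow_one_minus_le_weak; [split|]; nra.
  - eapply Rle_trans;
      [apply (subset_prob_mono _ _ _ (fun S => Forall (fun r => ~ In r S) Q)); [lra|]|].
    + intros S _ [_ HQ]. apply Forall_forall. intros r Hr HrS. apply HQ; eauto.
    + rewrite subset_prob_all_out.
      * rewrite <- (second_quadrant_rays_length h). fold Q.
        apply pow_one_minus_le. lra.
      * apply NoDup_rays.
      * apply NoDup_second_quadrant_rays.
      * intros r Hr; apply (second_quadrant_rays_spec h r Hr).
Qed.

Lemma prob_no_sing_ge_le (Kn : nat) p : (3 <= Kn)%nat -> 0 <= p <= 1 ->
  subset_prob rays p (fun S => ~ has_sing_ge (2 * (Z.of_nat Kn - 1)) S) <=
  1 / (1 + INR (length (small_rays h Kn)) * ((1 - p) / 4)) +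
  1 / (1 + INR (length (small_rays h Kn)) * (p * p / 2)).
Proof.
  intros HKn Hp.
  eapply Rle_trans;
    [apply (subset_prob_mono _ _ _ (fun S => Forall (fun w => ~ gap_event h w S) (small_rays h Kn)));
     [lra|]|].
  - intros S Hincl Hns. apply Forall_forall. intros w Hw Hgap.
    destruct (gap_event_singular h Kn HKn w S Hw Hincl Hgap) as [u [v [Hc Hidx]]].
    apply Hns. exists u, v. split; auto. lia.
  - rewrite prob_no_gap by lia.
    pose proof (pos_INR (length (small_rays h Kn))).
    assert (0 <= p * p) by nra.
    pose proof (inv_one_plus_ge0 (INR (length (small_rays h Kn)) * ((1 - p) / 4))
                  ltac:(apply Rmult_le_pos; lra)).
    pose proof (inv_one_plus_ge0 (INR (length (small_rays h Kn)) * (p * p / 2))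
                  ltac:(apply Rmult_le_pos; lra)).
    destruct (Rle_lt_dec (1 / 2) p).
    + assert (1 / 4 <= p * p) by nra.
      assert ((1 - p * p * (1 - p)) ^ length (small_rays h Kn) <=
              1 / (1 + INR (length (small_rays h Kn)) * ((1 - p) / 4)))
        by (apply pow_one_minus_le_weak; [split|]; nra).
      lra.
    + assert ((1 - p * p * (1 - p)) ^ length (small_rays h Kn) <=
              1 / (1 + INR (length (small_rays h Kn)) * (p * p / 2)))
        by (apply pow_one_minus_le_weak; [split|]; nra).
      lra.
Qed.

End Bounds.

(** * Asymptotics *)

Lemma whp_of_prob_ge q E e : (forall h, 0 <= q h <= 1) ->
  (exists h0, forall h, (h >= h0)%nat -> 1 - e h <= probT h (1 - q h) E) ->
  Un_cv e 0 -> whp q E.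
Proof.
  intros Hq [h0 Hge] He eps Heps. destruct (He eps Heps) as [N HN].
  exists (max N h0). intros n Hn.
  specialize (HN n ltac:(lia)). specialize (Hge n ltac:(lia)).
  assert (Hle1 : probT n (1 - q n) E <= 1)
    by (rewrite probT_eq; apply subset_prob_le1; specialize (Hq n); lra).
  unfold R_dist in *. rewrite Rminus_0_r in HN.
  rewrite Rabs_left1 by lra. apply Rabs_def2 in HN. lra.
Qed.

Lemma cv0_scal f c : Un_cv f 0 -> Un_cv (fun h => c * f h) 0.
Proof.
  intros Hf. replace 0 with (c * 0) by ring. apply CV_mult; auto.
  intros eps Heps. exists 0%nat. intros. unfold R_dist. rewrite Rminus_diag, Rabs_R0. auto.
Qed.

Lemma cv0_plus f g : Un_cv f 0 -> Un_cv g 0 -> Un_cv (fun h => f h + g h) 0.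
Proof. intros. replace 0 with (0 + 0) by ring. apply CV_plus; auto. Qed.

Lemma cv0_eventually_ext f g N :
  (forall n, (n >= N)%nat -> f n = g n) -> Un_cv f 0 -> Un_cv g 0.
Proof.
  intros E Hf eps Heps. destruct (Hf eps Heps) as [M HM]. exists (max M N).
  intros n Hn. rewrite <- E by lia. apply HM; lia.
Qed.

Lemma inv_one_plus_cv0 (x y m : nat -> R) c gam :
  0 < c -> 0 < gam -> (forall h, 0 <= x h) -> (forall h, gam * x h <= y h) ->
  (exists h0, forall h, (h >= h0)%nat -> c * INR h ^ 2 <= m h) ->
  succ x inv_sq -> Un_cv (fun h => 1 / (1 + m h * y h)) 0.
Proof.
  intros Hc Hg Hx Hy [h0 Hm] [[N1 HN1] Hcv] eps Heps.
  destruct (Hcv (eps * c * gam)) as [N2 HN2].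
  { apply Rmult_lt_0_compat; auto. apply Rmult_lt_0_compat; auto. }
  exists (max (max N1 N2) (max h0 1)). intros n Hn.
  specialize (HN1 n ltac:(lia)). specialize (HN2 n ltac:(lia)). specialize (Hm n ltac:(lia)).
  assert (Hn0 : 0 < INR n) by (apply lt_0_INR; lia).
  assert (Hxn : 0 < x n) by (destruct (Hx n); auto; congruence).
  unfold R_dist, inv_sq in *. rewrite Rminus_0_r in *.
  set (t := INR n) in *.
  replace (1 / t ^ 2 / x n) with (1 / (t ^ 2 * x n)) in HN2 by (field; lra).
  assert (Hp : 0 < t ^ 2 * x n) by (apply Rmult_lt_0_compat; auto; apply pow_lt; auto).
  rewrite Rabs_right in HN2 by (apply Rle_ge, Rlt_le, Rdiv_lt_0_compat; lra).
  assert (Hmy : c * gam * (t ^ 2 * x n) <= m n * y n).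
  { specialize (Hy n). assert (0 <= c * t ^ 2) by (apply Rmult_le_pos; [lra | apply pow_le; lra]).
    apply Rle_trans with ((c * t ^ 2) * (gam * x n)); [right; ring|].
    apply Rmult_le_compat; try lra. apply Rmult_le_pos; lra. }
  assert (Hcg : 0 < c * gam * (t ^ 2 * x n))
    by (apply Rmult_lt_0_compat; [apply Rmult_lt_0_compat|]; auto).
  rewrite Rabs_right by (apply Rle_ge, Rlt_le, Rdiv_lt_0_compat; lra).
  apply Rle_lt_trans with (1 / (c * gam * (t ^ 2 * x n))).
  - apply Rmult_le_compat_l; [lra|]. apply Rinv_le_contravar; lra.
  - replace (1 / (c * gam * (t ^ 2 * x n))) with (1 / (t ^ 2 * x n) / (c * gam))
      by (field; lra).
    apply Rmult_lt_reg_r with (c * gam); [apply Rmult_lt_0_compat; auto|].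
    replace (1 / (t ^ 2 * x n) / (c * gam) * (c * gam)) with (1 / (t ^ 2 * x n))
      by (field; lra).
    lra.
Qed.

Lemma succ_sq_of_succ_inv_lin p : succ p inv_lin -> succ (fun h => p h * p h) inv_sq.
Proof.
  intros [[N1 HN1] Hcv]. split.
  - exists N1. intros n Hn E. apply (HN1 n Hn). nra.
  - apply (cv0_eventually_ext (fun n => (inv_lin n / p n) * (inv_lin n / p n)) _ (max N1 1)).
    + intros n Hn. specialize (HN1 n ltac:(lia)).
      assert (0 < INR n) by (apply lt_0_INR; lia).
      unfold inv_lin, inv_sq. field. split; lra.
    + replace 0 with (0 * 0) by ring. apply CV_mult; auto.
Qed.

Lemma INR_div_ge h d : (1 <= d)%nat -> INR h / INR d - 1 <= INR (h / d).
Proof.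
  intros Hd. pose proof (Nat.div_mod h d ltac:(lia)).
  pose proof (Nat.mod_upper_bound h d ltac:(lia)).
  assert (Hlt : (h < d * (h / d + 1))%nat) by lia. apply lt_INR in Hlt.
  rewrite mult_INR, plus_INR in Hlt. simpl in Hlt.
  assert (0 < INR d) by (apply lt_0_INR; lia).
  apply (Rmult_le_reg_l (INR d)); auto.
  replace (INR d * (INR h / INR d - 1)) with (INR h - INR d) by (field; lra). nra.
Qed.

Lemma small_rays_length_ge Kn : (1 <= Kn)%nat ->
  exists h0, forall h, (h >= h0)%nat ->
    / (64 * INR Kn ^ 2) * INR h ^ 2 <= INR (length (small_rays h Kn)).
Proof.
  intros HK. exists (4 * Kn)%nat. intros h Hh. rewrite small_rays_length.
  pose proof (coprime_pairs_length_ge (h / (2 * Kn))) as Hc.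
  pose proof (INR_div_ge h (2 * Kn) ltac:(lia)) as Hd.
  rewrite mult_INR in Hd. simpl (INR 2) in Hd.
  assert (HK0 : 1 <= INR Kn) by (apply (le_INR 1); lia).
  assert (Hh4 : 4 * INR Kn <= INR h).
  { replace 4 with (INR 4) by (simpl; lra). rewrite <- mult_INR. apply le_INR; lia. }
  set (A := INR (h / (2 * Kn))) in *. set (k := INR Kn) in *. set (t := INR h) in *.
  assert (HA : t / (4 * k) <= A).
  { eapply Rle_trans; [|exact Hd].
    assert (1 <= t / (4 * k)).
    { apply (Rmult_le_reg_l (4 * k)); [lra|].
      replace (4 * k * (t / (4 * k))) with t by (field; lra). lra. }
    replace (t / ((1 + 1) * k) - 1) with (t / (4 * k) + (t / (4 * k) - 1)) by (field; lra).
    lra. }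
  assert (0 <= t / (4 * k)) by (apply Rmult_le_pos; [lra | left; apply Rinv_0_lt_compat; lra]).
  assert (t / (4 * k) * (t / (4 * k)) <= A * A) by (apply Rmult_le_compat; lra).
  replace (/ (64 * k ^ 2) * t ^ 2) with (t / (4 * k) * (t / (4 * k)) / 4) by (field; lra).
  lra.
Qed.

Lemma box_size_le h : (h >= 1)%nat -> INR ((2 * h + 1) * (2 * h + 1)) <= 9 * INR h ^ 2.
Proof.
  intros Hh. replace (9 * INR h ^ 2) with (INR (9 * (h * h))) by (rewrite !mult_INR; simpl; ring).
  apply le_INR. nia.
Qed.

Lemma whp_smooth_of_prec (q p : nat -> R) : (forall h, 0 <= q h <= 1) ->
  (forall h, 1 - INR ((2 * h + 1) * (2 * h + 1)) * p h <= probT h (1 - q h) smooth) ->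
  (forall h, 0 <= p h) -> prec p inv_sq -> whp q smooth.
Proof.
  intros Hq Hge Hp [_ Hcv].
  apply (whp_of_prob_ge q smooth (fun h => 9 * (p h / inv_sq h))); auto.
  - exists 1%nat. intros h Hh. eapply Rle_trans; [|apply Hge].
    assert (0 < INR h) by (apply lt_0_INR; lia).
    replace (p h / inv_sq h) with (p h * INR h ^ 2) by (unfold inv_sq; field; lra).
    pose proof (box_size_le h Hh). specialize (Hp h). nra.
  - apply cv0_scal; auto.
Qed.

Lemma prob_smooth_le h p : 0 <= p <= 1 ->
  subset_prob (rays_upto h) p smooth <=
  1 / (1 + INR (length (small_rays h 3)) * ((1 - p) / 4)) +
  1 / (1 + INR (length (small_rays h 3)) * (p / 4)) +
  1 / (1 + INR (length (coprime_pairs h)) * p).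
Proof.
  intros Hp. pose proof (pos_INR (length (small_rays h 3))).
  pose proof (pos_INR (length (coprime_pairs h))).
  pose proof (inv_one_plus_ge0 (INR (length (small_rays h 3)) * ((1 - p) / 4))
                ltac:(apply Rmult_le_pos; lra)).
  pose proof (inv_one_plus_ge0 (INR (length (small_rays h 3)) * (p / 4))
                ltac:(apply Rmult_le_pos; lra)).
  pose proof (inv_one_plus_ge0 (INR (length (coprime_pairs h)) * p)
                ltac:(apply Rmult_le_pos; lra)).
  destruct (Rle_lt_dec (1 / 2) p).
  - pose proof (prob_smooth_le_high h p ltac:(lra)). lra.
  - pose proof (prob_smooth_le_low h p ltac:(lra)). lra.
Qed.

Lemma whp_singular q : (forall h, 0 <= q h <= 1) ->
  succ q inv_sq -> succ (fun h => 1 - q h) inv_sq -> whp q (fun S => ~ smooth S).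
Proof.
  intros Hq Hq2 Hp2.
  set (m h := INR (length (small_rays h 3))).
  set (r h := INR (length (coprime_pairs h))).
  apply (whp_of_prob_ge q _ (fun h => 1 / (1 + m h * ((1 - (1 - q h)) / 4)) +
                                       1 / (1 + m h * ((1 - q h) / 4)) +
                                       1 / (1 + r h * (1 - q h)))); auto.
  - exists 0%nat. intros h _. rewrite probT_eq.
    apply subset_prob_compl_ge, prob_smooth_le. specialize (Hq h); lra.
  - destruct (small_rays_length_ge 3 ltac:(lia)) as [h0 Hm].
    assert (Hc : 0 < / (64 * INR 3 ^ 2)) by (apply Rinv_0_lt_compat; simpl; lra).
    assert (Hp : forall h, 0 <= 1 - q h) by (intros h; specialize (Hq h); lra).
    repeat apply cv0_plus.
    + apply (inv_one_plus_cv0 q _ m _ (/ 4) Hc ltac:(lra) (fun h => proj1 (Hq h)));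
        [intros; lra | exists h0; auto | auto].
    + apply (inv_one_plus_cv0 (fun h => 1 - q h) _ m _ (/ 4) Hc ltac:(lra) Hp);
        [intros; lra | exists h0; auto | auto].
    + apply (inv_one_plus_cv0 (fun h => 1 - q h) _ r (/ 4) 1 ltac:(lra) ltac:(lra) Hp);
        [intros; lra | exists 0%nat; intros h _; unfold r | auto].
      pose proof (coprime_pairs_length_ge h). replace (INR h ^ 2) with (INR h * INR h) by ring.
      lra.
Qed.

Lemma whp_sing_ge k q : (forall h, 0 <= q h <= 1) -> (k > 1)%Z ->
  succ (fun h => 1 - q h) inv_lin -> succ q inv_sq -> whp q (has_sing_ge k).
Proof.
  intros Hq Hk Hlin Hq2.
  set (Kn := (Z.to_nat k + 3)%nat).
  set (m h := INR (length (small_rays h Kn))).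
  apply (whp_of_prob_ge q _ (fun h => 1 / (1 + m h * ((1 - (1 - q h)) / 4)) +
                                       1 / (1 + m h * ((1 - q h) * (1 - q h) / 2)))); auto.
  - exists 0%nat. intros h _. rewrite probT_eq.
    rewrite (subset_prob_ext _ _ _ (fun S => ~ ~ has_sing_ge k S)) by (intros; tauto).
    apply subset_prob_compl_ge.
    eapply Rle_trans; [|apply (prob_no_sing_ge_le h Kn); [lia | specialize (Hq h); lra]].
    apply subset_prob_mono; [specialize (Hq h); lra|].
    intros S _ Hns [u [v [Hc Hi]]]. apply Hns. exists u, v. split; auto. unfold Kn. lia.
  - destruct (small_rays_length_ge Kn ltac:(lia)) as [h0 Hm].
    assert (Hc : 0 < / (64 * INR Kn ^ 2)).
    { apply Rinv_0_lt_compat. assert (1 <= INR Kn) by (apply (le_INR 1); lia). nra. }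
    apply cv0_plus.
    + apply (inv_one_plus_cv0 q _ m _ (/ 4) Hc ltac:(lra) (fun h => proj1 (Hq h)));
        [intros; lra | exists h0; auto | auto].
    + apply (inv_one_plus_cv0 (fun h => (1 - q h) * (1 - q h)) _ m _ (/ 2) Hc ltac:(lra));
        [intros h; specialize (Hq h); nra | intros; lra | exists h0; auto
        | apply succ_sq_of_succ_inv_lin; auto].
Qed.

Theorem theorem1 (q : nat -> R) (Hq : forall h, 0 <= q h <= 1) :
  ((prec q inv_sq \/ prec (fun h => 1 - q h) inv_sq) -> whp q smooth) /\
  ((succ q inv_sq /\ succ (fun h => 1 - q h) inv_sq) ->
      whp q (fun S => ~ smooth S)) /\
  (forall k : Z, (k > 1)%Z ->
      succ (fun h => 1 - q h) inv_lin -> succ q inv_sq ->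
      whp q (has_sing_ge k)).
Proof.
  split; [|split].
  - intros [Hprec|Hprec].
    + apply (whp_smooth_of_prec q q); auto; [|intros h; apply Hq].
      intros h. apply prob_smooth_ge_complete, Hq.
    + apply (whp_smooth_of_prec q (fun h => 1 - q h)); auto;
        [|intros h; specialize (Hq h); lra].
      intros h. apply prob_smooth_ge_empty. specialize (Hq h); lra.
  - intros [Hq2 Hp2]. apply whp_singular; auto.
  - intros k Hk Hlin Hq2. apply whp_sing_ge; auto.
Qed.
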